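(* Let $\lambda\in(0,1)$, $X=[0,1]^2$, $X_1=\{(x,y)\in X:y<x^2\}$, $X_2=\{(x,y)\in X:y>x^2\}$, $f_1(x,y)=\lambda(x,y)$ and $f_2(x,y)=(1-\lambda x,\lambda y)$. Let $f:X\to X$ be any map with $f|_{X_i}=f_i$ for $i=1,2$. Then $L=\overline{\{(\lambda^n,0):n\in\mathbb N\}}=\Lambda$, and the attractor is transitive.
   Context: Here $\Delta:=X\setminus(X_1\cup X_2)=\{y=x^2\}$ and $\tilde X:=\bigcap_{n\ge0}f^{-n}(X\setminus\Delta)$. For $x\in\tilde X$, $\omega(x)$ is the set of limits of $f^{n_k}(x)$ along divergent sequences $(n_k)$; the limit set is $L:=\overline{\bigcup_{x\in\tilde X}\omega(x)}$. With $F_i(A):=\overline{f(A\cap X_i)}$, atoms of generation $n$ are the sets $F_{i_n}\circ\cdots\circ F_{i_1}(X)$, $\Lambda_n$ is their union, and the attractor is $\Lambda:=\bigcap_{n\ge1}\Lambda_n$. A compact set $Y$ is transitive if $Y=\omega(x)$ for some $x\in\tilde X$. *)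

From HB Require Import structures.
From mathcomp Require Import all_boot all_order all_algebra.
From mathcomp Require Import all_classical all_reals all_analysis.
Set Implicit Arguments. Unset Strict Implicit. Unset Printing Implicit Defensive.
Import Order.TTheory GRing.Theory Num.Theory.
Import numFieldNormedType.Exports.
Local Open Scope classical_set_scope.
Local Open Scope ring_scope.

Section Defs.
Variable R : realType.
Notation pt := (R * R)%type.

Definition Xsq : set pt := [set p | 0 <= p.1 <= 1 /\ 0 <= p.2 <= 1].
Definition X1 : set pt := [set p | Xsq p /\ p.2 < p.1 ^+ 2].
Definition X2 : set pt := [set p | Xsq p /\ p.2 > p.1 ^+ 2].
Definition Delta : set pt := Xsq `\` (X1 `|` X2).

Definition f1 (lam : R) (p : pt) : pt := (lam * p.1, lam * p.2).
Definition f2 (lam : R) (p : pt) : pt := (1 - lam * p.1, lam * p.2).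

Definition Xtilde (f : pt -> pt) : set pt :=
  [set x | Xsq x /\ forall n : nat, (Xsq `\` Delta) (iter n f x)].

Definition omega (f : pt -> pt) (x : pt) : set pt :=
  [set p : pt | exists nk : nat -> nat,
      (forall M : nat, exists K : nat, forall k : nat, (K <= k)%N -> (M <= nk k)%N)
      /\ (fun k => iter (nk k) f x) @ \oo --> p].

Definition limset (f : pt -> pt) : set pt :=
  closure (\bigcup_(x in Xtilde f) omega f x).

Inductive piece := P1 | P2.
Definition Xi (i : piece) : set pt := match i with P1 => X1 | P2 => X2 end.

Definition Fmap (f : pt -> pt) (i : piece) (A : set pt) : set pt :=
  closure (f @` (A `&` Xi i)).

(* atom F_{i_n} o ... o F_{i_1} (X) for the word w = [:: i_n; ...; i_1] *)
Definition atom (f : pt -> pt) (w : seq piece) : set pt :=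
  foldr (Fmap f) Xsq w.

Definition Lambda_n (f : pt -> pt) (n : nat) : set pt :=
  [set p | exists w : seq piece, size w = n /\ atom f w p].

Definition attractor (f : pt -> pt) : set pt :=
  \bigcap_(n in [set n : nat | (1 <= n)%N]) Lambda_n f n.

Definition transitive_set (f : pt -> pt) (Y : set pt) : Prop :=
  compact Y /\ exists x, Xtilde f x /\ omega f x = Y.

End Defs.

(* Off the parabola [Delta] both branches multiply the height by [lam], so heights
   along an orbit of [Xtilde f] decay like [lam ^+ n].  A point of [X2] at height [y]
   has abscissa below [Num.sqrt y], so once heights are small a step of [f2] lands near
   [(1, 0)], while [f1] shrinks towards the origin: orbits, and likewise atoms of high
   generation, stay close to the points [(lam ^+ k, 0)].  Conversely [(lam ^+ i, 0)] is
   reached by the atom of [P1^i P2 P1^j] and [(0, 0)] by the atoms of [P1^j].  Finally,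
   the orbit of [(a, 1)] meets [Delta] only for countably many [a]; for any other [a] it
   returns to [X2] infinitely often, each time at a small height, and then runs along
   the whole sequence [(lam ^+ m, 0)], so its omega-limit set is the attractor. *)

From HB Require Import structures.
From mathcomp Require Import all_boot all_order all_algebra.
From mathcomp Require Import all_classical all_reals all_analysis.
From mathcomp Require Import ring lra.
Import Order.TTheory GRing.Theory Num.Theory.
Import numFieldNormedType.Exports.
Local Open Scope classical_set_scope.
Local Open Scope ring_scope.

Set Implicit Arguments.
Unset Strict Implicit.
Unset Printing Implicit Defensive.

Section RealFacts.
Variable R : realType.

Definition close (p q : R * R) e := `|p.1 - q.1| < e /\ `|p.2 - q.2| < e.

Lemma ball_close (p q : R * R) e : ball p e q <-> close p q e.
Proof. by []. Qed.

Lemma expr_lt_eventually (l d : R) : 0 <= l -> l < 1 -> 0 < d ->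
  exists N, forall n, (N <= n)%N -> l ^+ n < d.
Proof.
move=> l0 l1 d0.
have : (fun n => l ^+ n) @ \oo --> (0 : R) by apply: cvg_expr; rewrite ger0_norm.
move=> /cvgrPdist_lt /(_ d d0) [N _ HN]; exists N => n Nn.
by have := HN n Nn; rewrite sub0r normrN ger0_norm // exprn_ge0.
Qed.

Lemma omegaP (f : R * R -> R * R) x p : omega f x p <->
  forall e, 0 < e -> forall M, exists n, (M <= n)%N /\ close (iter n f x) p e.
Proof.
split.
  move=> [nk [nk_div nk_cvg]] e e0 M.
  have [K HK] := nk_div M.
  move: nk_cvg => /cvg_ballP /(_ e e0) [K' _ HK'].
  exists (nk (maxn K K')); split; first by apply: HK; rewrite leq_maxl.
  by have /ball_close[c1 c2] := HK' (maxn K K') (leq_maxr _ _); split; rewrite distrC.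
move=> H.
have /choice [nk Hnk] : forall k : nat, exists n, (k <= n)%N /\
    close (iter n f x) p ((2^-1 : R) ^+ k).
  by move=> k; apply: H; apply: exprn_gt0; lra.
exists nk; split.
  by move=> M; exists M => k Mk; apply: leq_trans Mk (Hnk k).1.
apply/cvg_ballP => e e0.
have [N HN] : exists N, forall n, (N <= n)%N -> 2^-1 ^+ n < e.
  by apply: expr_lt_eventually => //; lra.
exists N => // k /= Nk.
have [_ [c1 c2]] := Hnk k; have := HN k Nk.
by move=> ?; apply/ball_close; split; rewrite distrC; lra.
Qed.

Lemma closure_closeP (A : set (R * R)) p :
  closure A p <-> forall e, 0 < e -> exists q, A q /\ close p q e.
Proof.
split.
  move=> cl e e0; have [q [Aq bq]] := cl (ball p e) (nbhsx_ballx _ _ e0).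
  by exists q; split => //; apply/ball_close.
move=> H B /nbhs_ballP [e /= e0 sB].
have [q [Aq cq]] := H e e0.
by exists q; split => //; apply: sB; apply/ball_close.
Qed.

(* Countable sets are Lebesgue-null, and [0,1] is not. *)
Lemma exists_unit_interval_notin_range (h : seq bool -> R) :
  exists a : R, 0 <= a <= 1 /\ forall w, a <> h w.
Proof.
apply: contrapT => H.
have sub : `[(0:R), 1] `<=` range h.
  move=> a /=; rewrite in_itv /= => a01.
  apply: contrapT => na; apply: H; exists a; split => // w aw.
  by apply: na; exists w.
have c : countable (range h).
  by apply: sub_countable (card_image_le _ _) _; exact: countableP.
have c01 : countable `[(0:R), 1] by apply: sub_countable (subset_card_le sub) c.
have := countable_lebesgue_measure0 c01.
rewrite lebesgue_measure_itv /= lte_fin ltr01 /=.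
by move=> /eqP; rewrite -EFinD subr0 eqe oner_eq0.
Qed.

End RealFacts.

Section Dynamics.
Variables (R : realType) (lam : R) (f : R * R -> R * R).
Hypothesis lam01 : 0 < lam < 1.
Hypothesis f_Xsq : forall p, Xsq p -> Xsq (f p).
Hypothesis f_X1 : forall p, X1 p -> f p = f1 lam p.
Hypothesis f_X2 : forall p, X2 p -> f p = f2 lam p.

Let lam_gt0 : 0 < lam. Proof. by case/andP: lam01. Qed.
Let lam_lt1 : lam < 1. Proof. by case/andP: lam01. Qed.

Let lam_pow_gt0 n : 0 < lam ^+ n. Proof. exact: exprn_gt0. Qed.
Let lam_pow_le1 n : lam ^+ n <= 1. Proof. by rewrite exprn_ile1 ?ltW. Qed.

Lemma lam_pow_eventually (d : R) : 0 < d -> exists N, forall n, (N <= n)%N -> lam ^+ n < d.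
Proof. exact: expr_lt_eventually (ltW lam_gt0) lam_lt1. Qed.

Lemma XDeltaE (p : R * R) : (@Xsq R `\` @Delta R) p <-> X1 p \/ X2 p.
Proof.
rewrite /Delta; split.
  by move=> [Xp nD]; apply: contrapT => n12; apply: nD; split => // -[].
move=> X12; have Xp : Xsq p by case: X12 => -[].
by split => // -[_]; apply.
Qed.

Lemma Xtilde_iter x n : Xtilde f x -> X1 (iter n f x) \/ X2 (iter n f x).
Proof. by move=> [_ H]; apply/XDeltaE. Qed.

Lemma Xtilde_iter_Xsq x n : Xtilde f x -> Xsq (iter n f x).
Proof. by move=> /(Xtilde_iter n) [] []. Qed.

Lemma f_snd (p : R * R) : X1 p \/ X2 p -> (f p).2 = lam * p.2.
Proof. by case=> [/f_X1|/f_X2] ->. Qed.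

Lemma Xtilde_iter_snd x n : Xtilde f x -> (iter n f x).2 = lam ^+ n * x.2.
Proof.
move=> Xx; elim: n => [|n IH]; first by rewrite mul1r.
by rewrite iterS f_snd ?IH ?exprS ?mulrA //; exact: Xtilde_iter.
Qed.

Lemma X2_fst_lt (p : R * R) s : X2 p -> 0 <= s -> p.2 <= s ^+ 2 -> p.1 < s.
Proof.
move=> [[/andP[p10 _] _] p21] s0 p2s.
by rewrite -(ltr_pXn2r (_ : 0 < 2)%N) ?nnegrE //; apply: lt_le_trans p21 p2s.
Qed.

Definition near_pow (d x : R) := exists k, `|x - lam ^+ k| <= d.

Lemma near_pow_le (d d' x : R) : d <= d' -> near_pow d x -> near_pow d' x.
Proof. by move=> dd' [k Hk]; exists k; apply: le_trans dd'. Qed.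

Lemma near_pow_dist (d c x y : R) : `|x - y| <= c -> near_pow d y -> near_pow (c + d) x.
Proof.
move=> xy [k Hk]; exists k.
by rewrite -(subrK y x) -addrA; apply: le_trans (ler_normD _ _) _; apply: lerD.
Qed.

Lemma near_pow_unit (x : R) : 0 <= x <= 1 -> near_pow 1 x.
Proof. by move=> /andP[x0 x1]; exists 0%N; rewrite expr0 ler_norml; apply/andP; split; lra. Qed.

Lemma near_pow_f1 (d x : R) : near_pow d x -> near_pow (lam * d) (lam * x).
Proof.
move=> [k Hk]; exists k.+1.
by rewrite exprS -mulrBr normrM ger0_norm ?ler_wpM2l // ltW.
Qed.

Lemma near_pow_f2 (x : R) : 0 <= x -> near_pow (lam * x) (1 - lam * x).
Proof.
move=> x0; exists 0%N.
rewrite expr0 addrAC subrr add0r normrN ger0_norm //.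
exact: mulr_ge0 (ltW lam_gt0) x0.
Qed.

Definition lamseq n : R * R := (lam ^+ n, 0).

Local Notation S := (closure (range lamseq)).

(* Once [lam ^+ N <= e ^+ 2], every visit to [X2] happens with first coordinate
   below [e], and is sent within [e] of [(1, 0)]. *)
Lemma Xtilde_iter_near_pow x (e : R) N : Xtilde f x -> 0 < e -> lam ^+ N <= e ^+ 2 ->
  forall j, near_pow (e + lam ^+ j) (iter (N + j) f x).1.
Proof.
move=> Xx e0 lamN; elim => [|j IH].
  rewrite addn0 expr0; apply: near_pow_le (near_pow_unit _); first lra.
  by have [] := Xtilde_iter_Xsq N Xx.
set q := iter (N + j) f x.
have [/andP[q10 q11] _] := Xtilde_iter_Xsq (N + j) Xx.
rewrite addnS iterS -/q exprS.
have q2 : q.2 <= e ^+ 2.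
  rewrite Xtilde_iter_snd // exprD -mulrA; apply: le_trans lamN.
  have [_ /andP[x20 x21]] := Xx.1.
  exact: ler_piMr (ltW (lam_pow_gt0 N)) (mulr_ile1 (ltW (lam_pow_gt0 j)) x20 (lam_pow_le1 j) x21).
have lj := mulr_gt0 lam_gt0 (lam_pow_gt0 j).
case: (Xtilde_iter (N + j) Xx) => [/f_X1 -> | X2q].
  apply: near_pow_le (near_pow_f1 IH).
  by rewrite mulrDr lerD2r ler_piMl ?(ltW e0) ?(ltW lam_lt1).
rewrite f_X2 //; apply: near_pow_le (near_pow_f2 q10).
have := X2_fst_lt X2q (ltW e0) q2.
have := ler_piMl q10 (ltW lam_lt1); lra.
Qed.

Lemma Xtilde_iter_snd_le x n : Xtilde f x -> 0 <= (iter n f x).2 <= lam ^+ n.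
Proof.
move=> Xx; have [_ /andP[-> _]] := Xtilde_iter_Xsq n Xx.
have [_ /andP[_ x21]] := Xx.1.
by rewrite Xtilde_iter_snd // ler_piMr // ltW.
Qed.

Lemma omega_sub_lamS x : Xtilde f x -> omega f x `<=` S.
Proof.
move=> Xx p /omegaP omp; apply/closure_closeP => e e0.
have e30 : 0 < e / 3 by lra.
have [N1 HN1] := lam_pow_eventually (mulr_gt0 e30 e30).
have [N2 HN2] := lam_pow_eventually e30.
pose N := maxn N1 N2.
have [n [Nn [c1 c2]]] := omp _ e30 (N + N2)%N.
have Nn' : (N <= n)%N by apply: leq_trans Nn; rewrite leq_addr.
have [k Hk] : near_pow (e / 3 + lam ^+ (n - N)) (iter n f x).1.
  have lamN : lam ^+ N <= (e / 3) ^+ 2 by rewrite expr2 ltW // HN1 // leq_maxl.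
  by have := Xtilde_iter_near_pow Xx e30 lamN (n - N); rewrite subnKC.
have small_j : lam ^+ (n - N) < e / 3 by apply: HN2; rewrite leq_subRL.
have small_n : lam ^+ n < e / 3 by apply: HN2; apply: leq_trans Nn'; rewrite leq_maxr.
have /andP[y0 yn] := Xtilde_iter_snd_le n Xx.
exists (lamseq k); split; first by exists k.
move: c1 c2 Hk; rewrite /close /lamseq /= subr0 !ltr_norml ler_norml.
move=> /andP[? ?] /andP[? ?] /andP[? ?]; split; apply/andP; split; lra.
Qed.

(** * The closure of the sequence [(lam ^+ n, 0)] *)

Lemma lam_pow_gap m m' : (m < m')%N -> lam ^+ m * (1 - lam) <= lam ^+ m - lam ^+ m'.
Proof.
move=> mm'; have := ler_wiXn2l (ltW lam_gt0) (ltW lam_lt1) mm'.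
by rewrite exprS mulrBr mulr1 mulrC lerD2l lerN2.
Qed.

Lemma lam_pow_isolated (a : R) m m' : a != 0 ->
  `|a - lam ^+ m| < `|a| * (1 - lam) / 4 -> `|a - lam ^+ m'| < `|a| * (1 - lam) / 4 ->
  m = m'.
Proof.
wlog mm' : m m' / (m <= m')%N.
  move=> H a0 h h'; case: (leqP m m') => [mm'|/ltnW mm']; first exact: H.
  by symmetry; exact: H.
move=> a0 h h'; apply/eqP; rewrite eqn_leq mm' /= leqNgt; apply/negP => lt_mm'.
have gap := lam_pow_gap lt_mm'.
set d := `|a| * (1 - lam) / 4 in h h'.
have d0 : 0 < d by rewrite /d !mulr_gt0 ?normr_gt0 ?subr_gt0 ?invr_gt0.
have a_le : `|a| <= `|a - lam ^+ m| + lam ^+ m.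
  by have := ler_normD (a - lam ^+ m) (lam ^+ m); rewrite subrK (gtr0_norm (lam_pow_gt0 m)).
have sep : ((`|a| - d) * (1 - lam) <= lam ^+ m * (1 - lam)).
  by rewrite ler_wpM2r ?subr_ge0 ?ltW //; lra.
have dE : (`|a| - d) * (1 - lam) = 3 * d + d * lam by rewrite /d; field.
have := mulr_gt0 d0 lam_gt0.
move: h h'; rewrite !ltr_norml => /andP[? ?] /andP[? ?]; lra.
Qed.

Lemma lamS_snd p : S p -> p.2 = 0.
Proof.
move/closure_closeP => Sp; apply/eqP; rewrite -normr_le0; apply/ler_addgt0Pr => e e0.
have [_ [[k _ <-] [_ c2]]] := Sp e e0.
by move: c2; rewrite /lamseq /= subr0 add0r => /ltW.
Qed.

Lemma lamS_fst p : S p -> p.1 = 0 \/ exists m, p.1 = lam ^+ m.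
Proof.
move=> /closure_closeP Sp; have [->|a0] := eqVneq p.1 0; [by left | right].
have d0 : 0 < `|p.1| * (1 - lam) / 4 by rewrite !mulr_gt0 ?normr_gt0 ?subr_gt0 ?invr_gt0.
have [_ [[m _ <-] [cm _]]] := Sp _ d0.
exists m; apply/eqP; rewrite -subr_eq0 -normr_le0; apply/ler_addgt0Pr => e e0.
have ed0 : 0 < Num.min e (`|p.1| * (1 - lam) / 4) by rewrite lt_min e0 d0.
have [_ [[m' _ <-] [/= cm' _]]] := Sp _ ed0.
move: cm'; rewrite lt_min => /andP[cme cmd].
by rewrite add0r (lam_pow_isolated a0 cm cmd) ltW.
Qed.

Lemma lamS_cases p : S p -> p = (0, 0) \/ exists m, p = lamseq m.
Proof.
case: p => a b Sp; have /= -> := lamS_snd Sp.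
by case: (lamS_fst Sp) => /= [->|[m ->]]; [left | right; exists m].
Qed.

(** * The attractor *)

Let mu : R := Num.sqrt lam.
Let mu_gt0 : 0 < mu. Proof. by rewrite sqrtr_gt0. Qed.
Let mu_sqr n : (mu ^+ n) ^+ 2 = lam ^+ n.
Proof. by rewrite exprAC sqr_sqrtr // ltW. Qed.
Let mu_lt1 : mu < 1.
Proof. by rewrite -(sqrtr1 R) ltr_sqrt. Qed.
Let lam_lt_mu : lam < mu.
Proof. by have := mu_sqr 1; rewrite !expr1 expr2 => <-; rewrite gtr_pMl. Qed.

(* An X2-point at height at most [lam ^+ n] has abscissa below [mu ^+ n]. *)
Lemma f_fst_near_pow i q n (d : R) : Xi i q -> 0 <= d ->
  near_pow (mu ^+ n + d) q.1 -> q.2 <= lam ^+ n -> near_pow (mu ^+ n.+1 + d) (f q).1.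
Proof.
have mu_n := exprn_gt0 n mu_gt0.
case: i => /= Xq d0 nq q2.
  rewrite f_X1 //; apply: near_pow_le (near_pow_f1 nq).
  rewrite exprS mulrDr; apply: lerD; first by rewrite ler_pM2r // (ltW lam_lt_mu).
  exact: ler_piMl d0 (ltW lam_lt1).
have [[/andP[q10 _] _] _] := Xq.
have q1 : q.1 < mu ^+ n by apply: X2_fst_lt => //; rewrite ?mu_sqr // ltW.
rewrite f_X2 //; apply: near_pow_le (near_pow_f2 q10).
rewrite exprS; apply: ler_wpDr d0 _.
apply: le_trans (ler_wpM2l (ltW lam_gt0) (ltW q1)) _.
by rewrite ler_pM2r // (ltW lam_lt_mu).
Qed.

Definition atom_bound n (p : R * R) := forall e : R, 0 < e ->
  near_pow (mu ^+ n + e) p.1 /\ `|p.2| <= lam ^+ n + e.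

Lemma atom_bounded w p : atom f w p -> atom_bound (size w) p.
Proof.
elim: w p => [|i w IH] p.
  move=> [/andP[p10 p11] /andP[p20 p21]] e e0; rewrite !expr0; split.
    by apply: near_pow_le (near_pow_unit _); rewrite ?p10 //; lra.
  by rewrite ger0_norm //; lra.
move=> /closure_closeP Hc e e0.
have e20 : 0 < e / 2 by lra.
have [_ [[q [Aq Xiq] <-] [c1 c2]]] := Hc _ e20; clear Hc.
have q2 : `|q.2| <= lam ^+ size w.
  by apply/ler_addgt0Pr => e' e'0; have [_] := IH q Aq e' e'0.
have nq1 := f_fst_near_pow Xiq (ltW e20) (IH q Aq _ e20).1 (le_trans (ler_norm _) q2).
have fq2 : (f q).2 = lam * q.2 by apply: f_snd; case: i Xiq; [left|right].
split.
  by apply: near_pow_le (near_pow_dist (ltW c1) nq1); rewrite /=; lra.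
rewrite -(subrK (f q).2 p.2) fq2 /= exprS.
apply: le_trans (ler_normD _ _) _; rewrite normrM (ger0_norm (ltW lam_gt0)).
rewrite fq2 in c2; have := ler_wpM2l (ltW lam_gt0) q2; lra.
Qed.

Lemma attractor_sub_lamS : attractor f `<=` S.
Proof.
move=> p Ap; apply/closure_closeP => e e0.
have e20 : 0 < e / 2 by lra.
have [N1 HN1] := expr_lt_eventually (ltW mu_gt0) mu_lt1 e20.
have [N2 HN2] := lam_pow_eventually e20.
have [w [sw Aw]] : Lambda_n f (maxn N1 N2).+1 p by apply: Ap.
have [[k Hk] p2] := atom_bounded Aw e20.
have mu_small : mu ^+ size w < e / 2 by rewrite sw HN1 // leqW // leq_maxl.
have lam_small : lam ^+ size w < e / 2 by rewrite sw HN2 // leqW // leq_maxr.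
exists (lamseq k); split; first by exists k.
by rewrite /close /lamseq /= subr0; split; lra.
Qed.

Lemma atom_nseq_P1 j u v : 0 < u -> u <= lam ^+ j -> 0 <= v -> v <= 1 ->
  lam * v < u ^+ 2 -> atom f (nseq j P1) (u, v).
Proof.
elim: j u v => [|j IH] u v u0 uj v0 v1 vu.
  by split; apply/andP; split; rewrite // ltW.
have uU : u = lam * (u / lam) by rewrite mulrC divfK ?gt_eqF.
have vV : v = lam * (v / lam) by rewrite mulrC divfK ?gt_eqF.
move: (u / lam) (v / lam) uU vV => U V -> -> in u0 uj v0 v1 vu *.
have l0 := lam_gt0; have l1 := lam_lt1; have lj1 := lam_pow_le1 j.
rewrite exprS ler_pM2l // in uj; rewrite pmulr_rgt0 // in u0; rewrite pmulr_rge0 // in v0.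
have VU : V < U ^+ 2.
  by rewrite -(ltr_pM2l (mulr_gt0 l0 l0)) -mulrA -expr2 -exprMn.
have U1 : U <= 1 := le_trans uj lj1.
have V1 : V <= 1 by apply: ltW (lt_le_trans VU _); exact: exprn_ile1 (ltW u0) U1.
have X1UV : X1 (U, V) by split => //; split; apply/andP; split; rewrite ?(ltW u0).
rewrite -/(f1 lam (U, V)) -f_X1 //; apply: subset_closure; exists (U, V) => //.
split => //; apply: IH => //; apply: le_lt_trans VU; exact: ler_piMl v0 (ltW l1).
Qed.

Lemma atom_cons_image i w q : atom f w q -> Xi i q -> atom f (i :: w) (f q).
Proof. by move=> Aq Xq; apply: subset_closure; exists q. Qed.

Lemma atom_nseq_P1_origin j : atom f (nseq j.+1 P1) (0, 0).
Proof.
apply/closure_closeP => e e0.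
pose t := Num.min (lam ^+ j) (e / 2).
have t0 : 0 < t by rewrite lt_min lam_pow_gt0 divr_gt0.
have tj : t <= lam ^+ j by rewrite ge_min lexx.
have te : t <= e / 2 by rewrite ge_min lexx orbT.
have X1t : X1 (t, 0).
  split; last exact: exprn_gt0.
  by split; apply/andP; split; rewrite ?lexx ?ler01 ?(ltW t0) ?(le_trans tj (lam_pow_le1 j)).
exists (f (t, 0)); split.
  by exists (t, 0) => //; split => //; apply: atom_nseq_P1; rewrite ?mulr0 ?exprn_gt0 ?ler01.
rewrite f_X1 // /close /= mulr0 !sub0r !normrN normr0 e0 gtr0_norm ?mulr_gt0 //.
by split => //; have := ler_piMl (ltW t0) (ltW lam_lt1); lra.
Qed.

Lemma atom_P2_one j : atom f (P2 :: nseq j P1) (1, 0).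
Proof.
apply/closure_closeP => e e0.
pose s := Num.min (lam ^+ j) (e / 2).
have s0 : 0 < s by rewrite lt_min lam_pow_gt0 divr_gt0.
have sj : s <= lam ^+ j by rewrite ge_min lexx.
have se : s <= e / 2 by rewrite ge_min lexx orbT.
have s1 : s <= 1 := le_trans sj (lam_pow_le1 j).
have ms0 : 0 < mu * s := mulr_gt0 mu_gt0 s0.
have ms_s : mu * s < s by rewrite gtr_pMl.
have mss_s : mu * s * s <= s := ler_piMl (ltW s0) (ltW (lt_le_trans ms_s s1)).
have mss0 : 0 <= mu * s * s by rewrite mulr_ge0 ?ltW.
have X2q : X2 (mu * s, mu * s * s).
  split; last by rewrite /= expr2 ltr_pM2l.
  by split; apply/andP; split => /=; rewrite ?(ltW ms0) //; lra.
exists (f (mu * s, mu * s * s)); split.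
  exists (mu * s, mu * s * s) => //; split => //; apply: atom_nseq_P1 => //; try lra.
  have : lam * s < mu * s by rewrite ltr_pM2r // lam_lt_mu.
  by rewrite expr2; nra.
have := ler_piMl (ltW ms0) (ltW lam_lt1); have := ler_piMl mss0 (ltW lam_lt1).
have := mulr_ge0 (ltW lam_gt0) (ltW ms0); have := mulr_ge0 (ltW lam_gt0) mss0.
rewrite f_X2 // /close /= !ltr_norml => *; split; apply/andP; split; lra.
Qed.

Lemma atom_P1_P2_pow i j : atom f (nseq i P1 ++ P2 :: nseq j P1) (lam ^+ i, 0).
Proof.
elim: i => [|i IH]; first exact: atom_P2_one.
have li := lam_pow_gt0 i.
have X1i : X1 (lam ^+ i, 0).
  split; last exact: exprn_gt0.
  by split; apply/andP; split; rewrite ?lexx ?ler01 ?(ltW li) ?lam_pow_le1.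
by have := @atom_cons_image P1 _ _ IH X1i; rewrite f_X1 // /f1 /= mulr0 -exprS.
Qed.

Lemma lamS_sub_attractor : S `<=` attractor f.
Proof.
move=> p /lamS_cases [->|[m ->]] n /= n1.
  case: n n1 => [//|n] _; exists (nseq n.+1 P1).
  by rewrite size_nseq; split => //; exact: atom_nseq_P1_origin.
have [mn|nm] := ltnP m n.
  exists (nseq m P1 ++ P2 :: nseq (n - m.+1) P1); split; last exact: atom_P1_P2_pow.
  by rewrite size_cat /= !size_nseq addnS -addSn subnKC.
exists (nseq n P1); rewrite size_nseq; split => //.
apply: atom_nseq_P1; rewrite ?lam_pow_gt0 ?lexx ?ler01 ?mulr0 ?exprn_gt0 //.
exact: (ler_wiXn2l (ltW lam_gt0) (ltW lam_lt1) nm).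
Qed.

(** * A transitive point *)

Definition branch (b : bool) (x : R) := if b then lam * x else 1 - lam * x.
Definition branches (w : seq bool) (x : R) := foldr branch x w.
Definition unbranch (b : bool) (v : R) := if b then v / lam else (1 - v) / lam.
Definition unbranches (w : seq bool) (v : R) := foldl (fun v b => unbranch b v) v w.

Lemma branchK b : cancel (branch b) (unbranch b).
Proof.
have lam_neq0 : lam != 0 by rewrite gt_eqF.
by move=> x; case: b; rewrite /unbranch /branch; field.
Qed.

Lemma branchesK w : cancel (branches w) (unbranches w).
Proof. by elim: w => //= b w IH x; rewrite /unbranches /= branchK; exact: IH. Qed.

Lemma iter_branches p n : (forall k, (k < n)%N -> X1 (iter k f p) \/ X2 (iter k f p)) ->
  exists2 w : seq bool, size w = n & iter n f p = (branches w p.1, lam ^+ n * p.2).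
Proof.
elim: n => [|n IH] reg; first by exists [::]; rewrite // mul1r -surjective_pairing.
have [w sw E] := IH (fun k kn => reg k (leqW kn)).
have := reg n (ltnSn n); rewrite iterS E => -[/f_X1 -> | /f_X2 ->].
  by exists (true :: w); rewrite /= ?sw // /f1 exprS mulrA.
by exists (false :: w); rewrite /= ?sw // /f2 exprS mulrA.
Qed.

Lemma Xsq_iter p n : Xsq p -> Xsq (iter n f p).
Proof. by move=> Xp; elim: n => // n IH; rewrite iterS; apply: f_Xsq. Qed.

Lemma Delta_parabola (p : R * R) : Xsq p -> ~ X1 p -> ~ X2 p -> p.2 = p.1 ^+ 2.
Proof.
move=> Xp n1 n2; apply/eqP; rewrite eq_le !leNgt.
by apply/andP; split; apply/negP => h; [apply: n2 | apply: n1].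
Qed.

(* The orbit of [(a, 1)] first meets [Delta] after the branches [w] only if
   [a = unbranches w (Num.sqrt (lam ^+ size w))]: countably many values of [a]. *)
Lemma exists_Xtilde_top : exists a, Xtilde f (a, 1).
Proof.
have [a [a01 a_notin]] :=
  exists_unit_interval_notin_range (fun w => unbranches w (Num.sqrt (lam ^+ size w))).
have X0 : Xsq (a, 1) by split => //=; rewrite lexx ler01.
exists a; split => // n; apply/XDeltaE; apply: contrapT => bad_n.
have ex_bad : exists n, ~~ `[< X1 (iter n f (a, 1)) \/ X2 (iter n f (a, 1)) >].
  by exists n; apply/asboolPn.
case: (ex_minnP ex_bad) => m /asboolPn bad_m min_m.
have [w sw E] : exists2 w : seq bool, size w = m &
    iter m f (a, 1) = (branches w a, lam ^+ m * 1).
  apply: iter_branches => k km; apply: contrapT => /asboolPn /min_m.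
  by rewrite leqNgt km.
have Xm := Xsq_iter m X0; rewrite E in Xm bad_m.
have [/andP[wa0 _] _] := Xm.
have /= := Delta_parabola Xm (fun h => bad_m (or_introl h)) (fun h => bad_m (or_intror h)).
rewrite mulr1 => lamE; apply: (a_notin w) => /=.
by rewrite sw lamE sqrtr_sqr ger0_norm // branchesK.
Qed.

(* Staying in [X1] from time [N] on would give abscissa [lam ^+ N * _] at time [N + N],
   below the parabola through the height [lam ^+ (N + N)]. *)
Lemma Xtilde_top_visits_X2 x N : Xtilde f x -> x.2 = 1 ->
  exists2 t, (N <= t)%N & X2 (iter t f x).
Proof.
move=> Xx x2; apply: contrapT => noX2.
have X1_late t : (N <= t)%N -> X1 (iter t f x).
  by move=> Nt; case: (Xtilde_iter t Xx) => // X2t; case: noX2; exists t.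
have fstE j : (iter (N + j) f x).1 = lam ^+ j * (iter N f x).1.
  elim: j => [|j IH]; first by rewrite addn0 mul1r.
  rewrite addnS iterS f_X1; last by apply: X1_late; rewrite leq_addr.
  by rewrite /f1 /= IH exprS mulrA.
have [_] := X1_late (N + N)%N (leq_addr _ _).
rewrite fstE Xtilde_iter_snd // x2 mulr1 exprD exprMn.
have [/andP[xN0 xN1] _] := Xtilde_iter_Xsq N Xx.
rewrite -expr2 ltr_pMr ?exprn_gt0 // ltNge.
by rewrite exprn_ile1.
Qed.

Lemma omega_top_origin x : Xtilde f x -> x.2 = 1 -> omega f x (0, 0).
Proof.
move=> Xx x2; apply/omegaP => e e0 M.
have [N1 HN1] := lam_pow_eventually (mulr_gt0 e0 e0).
have [N2 HN2] := lam_pow_eventually e0.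
have [t Nt X2t] := Xtilde_top_visits_X2 (maxn M (maxn N1 N2)) Xx x2.
rewrite !geq_max in Nt; case/and3P: Nt => Mt N1t N2t.
have yt : (iter t f x).2 = lam ^+ t by rewrite Xtilde_iter_snd // x2 mulr1.
have yt_small : (iter t f x).2 <= e ^+ 2 by rewrite yt expr2 ltW ?HN1.
have := X2_fst_lt X2t (ltW e0) yt_small.
have [[/andP[x0 _] _] _] := X2t.
exists t; split => //; rewrite /close /= !subr0 yt !ger0_norm ?(ltW (lam_pow_gt0 t)) //.
by split => //; exact: HN2.
Qed.

Lemma below_parabola i m (c y : R) : (i <= m)%N -> 1 - lam <= c ->
  y < lam ^+ m * (1 - lam) ^+ 2 -> lam ^+ i * y < (lam ^+ i * c) ^+ 2.
Proof.
move=> im c_ge y_lt; rewrite exprMn expr2 -mulrA ltr_pM2l //.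
have lam1 : 0 <= 1 - lam by rewrite subr_ge0 ltW.
apply: lt_le_trans y_lt _; apply: ler_pM; rewrite ?exprn_ge0 ?(ltW lam_gt0) //.
  exact: (ler_wiXn2l (ltW lam_gt0) (ltW lam_lt1) im).
by rewrite !expr2 ler_pM.
Qed.

Lemma iter_after_X2 x t m : Xtilde f x -> X2 (iter t f x) ->
  lam * (iter t f x).2 < lam ^+ m * (1 - lam) ^+ 2 -> forall i, (i <= m)%N ->
  iter (t.+1 + i) f x =
    (lam ^+ i * (1 - lam * (iter t f x).1), lam ^+ i * (lam * (iter t f x).2)).
Proof.
set q := iter t f x => Xx X2q low; elim => [|i IH] im.
  by rewrite addn0 iterS -/q f_X2 // /f2 !mul1r.
have c_ge : 1 - lam <= 1 - lam * q.1.
  have [[/andP[_ q11] _] _] := X2q.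
  by rewrite lerD2l lerN2; exact: ler_piMr (ltW lam_gt0) q11.
have := Xtilde_iter (t.+1 + i) Xx.
rewrite addnS iterS (IH (ltnW im)) => -[/f_X1 -> | [_ /= h]].
  by rewrite /f1 /= !exprS !mulrA.
by have := lt_trans h (below_parabola (ltnW im) c_ge low); rewrite ltxx.
Qed.

Lemma omega_top_lamseq x m : Xtilde f x -> x.2 = 1 -> omega f x (lamseq m).
Proof.
move=> Xx x2; apply/omegaP => e e0 M.
have gap0 : 0 < lam ^+ m * (1 - lam) ^+ 2 by rewrite mulr_gt0 ?exprn_gt0 ?subr_gt0.
have [N1 HN1] := lam_pow_eventually (mulr_gt0 e0 e0).
have [N2 HN2] := lam_pow_eventually e0.
have [N3 HN3] := lam_pow_eventually gap0.
have [t Nt X2t] := Xtilde_top_visits_X2 (maxn M (maxn N1 (maxn N2 N3))) Xx x2.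
rewrite !geq_max in Nt; case/and4P: Nt => Mt N1t N2t N3t.
have yt : (iter t f x).2 = lam ^+ t by rewrite Xtilde_iter_snd // x2 mulr1.
have low : lam * (iter t f x).2 < lam ^+ m * (1 - lam) ^+ 2.
  by rewrite yt; apply: le_lt_trans (HN3 _ N3t); rewrite ler_piMl ?ltW.
have xt : (iter t f x).1 < e.
  by apply: X2_fst_lt X2t (ltW e0) _; rewrite yt expr2 ltW ?HN1.
exists (t.+1 + m)%N; split; first by rewrite (leq_trans Mt) // addSn leqW ?leq_addr.
rewrite (iter_after_X2 Xx X2t low (leqnn m)) /close /lamseq /= mulrBr mulr1 subr0.
have [[/andP[x0 _] _] _] := X2t.
have lx := ler_piMl x0 (ltW lam_lt1).
have lx0 : 0 <= lam * (iter t f x).1 := mulr_ge0 (ltW lam_gt0) x0.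
have := ler_piMl lx0 (lam_pow_le1 m); have := mulr_ge0 (ltW (lam_pow_gt0 m)) lx0.
have y0 : 0 <= (iter t f x).2 by rewrite yt; exact: ltW (lam_pow_gt0 t).
have := mulr_ge0 (ltW (lam_pow_gt0 m)) (mulr_ge0 (ltW lam_gt0) y0).
have ly : lam ^+ m * (lam * (iter t f x).2) <= (iter t f x).2.
  rewrite mulrA; apply: ler_piMl y0 _.
  exact: mulr_ile1 (ltW (lam_pow_gt0 m)) (ltW lam_gt0) (lam_pow_le1 m) (ltW lam_lt1).
have := HN2 _ N2t; rewrite -yt.
by rewrite !ltr_norml => *; split; apply/andP; split; lra.
Qed.

Lemma omega_top x : Xtilde f x -> x.2 = 1 -> omega f x = S.
Proof.
move=> Xx x2; apply/seteqP; split; first exact: omega_sub_lamS.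
by move=> p /lamS_cases [->|[m ->]]; [exact: omega_top_origin | exact: omega_top_lamseq].
Qed.

Lemma attractor_eq : attractor f = S.
Proof. by apply/seteqP; split; [exact: attractor_sub_lamS | exact: lamS_sub_attractor]. Qed.

Lemma limset_eq : limset f = S.
Proof.
have [a Xa] := exists_Xtilde_top.
apply/seteqP; split.
  rewrite [X in _ `<=` X](closure_id _).1; last exact: closed_closure.
  by apply: closureS => p [x Xx]; exact: omega_sub_lamS.
by move=> p Sp; apply: subset_closure; exists (a, 1) => //; rewrite omega_top.
Qed.

Lemma lamS_compact : compact S.
Proof.
apply: (@subclosed_compact _ _ (`[(0:R), 1] `*` `[(0:R), 1])).
- exact: closed_closure.
- exact: compact_setX (@segment_compact R 0 1) (@segment_compact R 0 1).
move=> p /lamS_cases [->|[m ->]]; split => /=; rewrite in_itv /= ?lexx ?ler01 //.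
by rewrite (ltW (lam_pow_gt0 m)) lam_pow_le1.
Qed.

Lemma attractor_transitive : transitive_set f (attractor f).
Proof.
have [a Xa] := exists_Xtilde_top.
rewrite attractor_eq; split; first exact: lamS_compact.
by exists (a, 1); split => //; rewrite omega_top.
Qed.

End Dynamics.

Theorem proposition2 (R : realType) (lam : R) (f : R * R -> R * R) :
  0 < lam < 1 ->
  (forall p, Xsq p -> Xsq (f p)) ->
  (forall p, X1 p -> f p = f1 lam p) ->
  (forall p, X2 p -> f p = f2 lam p) ->
  limset f = closure (range (fun n : nat => ((lam ^+ n : R), (0 : R)) : R * R)) /\
  attractor f = closure (range (fun n : nat => ((lam ^+ n : R), (0 : R)) : R * R)) /\
  transitive_set f (attractor f).
Proof.
move=> lam01 f_Xsq f_X1 f_X2.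
split; first exact: (limset_eq lam01 f_Xsq f_X1 f_X2).
split; first exact: (attractor_eq lam01 f_X1 f_X2).
exact: (attractor_transitive lam01 f_Xsq f_X1 f_X2).
Qed.
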